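(* Let $\mathcal E$ be an exchangeability system for a noncommutative probability space $(\mathcal A,\phi)$ and let $(X_i)_{i=1}^n$ and $(Y_i)_{i=1}^n$ be $\mathcal E$-independent families in $\mathcal A$. Then $K_n(X_1+Y_1,\dots,X_n+Y_n)=K_n(X_1,\dots,X_n)+K_n(Y_1,\dots,Y_n)$.
   Context: A noncommutative probability space is a pair $(\mathcal A,\phi)$ of a complex unital algebra $\mathcal A$ and a unital linear functional $\phi$. An exchangeability system $\mathcal E$ for $(\mathcal A,\phi)$ consists of a noncommutative probability space $(\mathcal U,\tilde\phi)$ and a family $(\iota_k)_{k\in\mathbb N}$ of embeddings (injective unital algebra homomorphisms) $\iota_k:\mathcal A\to\mathcal A_k\subseteq\mathcal U$ with $\tilde\phi\circ\iota_k=\phi$; write $X^{(k)}=\iota_k(X)$. It is required that for all $X_1,\dots,X_n\in\mathcal A$, all indices $i_1,\dots,i_n\in\mathbb N$ and every bijection $\sigma$ of $\mathbb N$, $\tilde\phi(X_1^{(i_1)}\cdots X_n^{(i_n)})=\tilde\phi(X_1^{(\sigma(i_1))}\cdots X_n^{(\sigma(i_n))})$; this value depends only on the kernel of $j\mapsto i_j$ (partition of $[n]$ into level sets) and for a partition $\pi$ of $[n]$ it is denoted $\phi_\pi(X_1,\dots,X_n)$. For a primitive $n$-th root of unity $\omega$ put $X_j^\omega=\sum_{k=1}^n\omega^kX_j^{(k)}$ and $K_n(X_1,\dots,X_n)=\frac1n\tilde\phi(X_1^\omega\cdots X_n^\omega)$. Subalgebras $\mathcal B,\mathcal C\subseteq\mathcal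 A$ are $\mathcal E$-independent if for all $X_1,\dots,X_n\in\mathcal B\cup\mathcal C$ and every decomposition $[n]=I\sqcup J$ with $X_i\in\mathcal B$ for $i\in I$, $X_i\in\mathcal C$ for $i\in J$, one has $\phi_\pi(X_1,\dots,X_n)=\phi_{\pi'}(X_1,\dots,X_n)$ whenever $\pi|_I=\pi'|_I$ and $\pi|_J=\pi'|_J$. Two families are $\mathcal E$-independent if the subalgebras they generate are. *)

From HB Require Import structures.
From mathcomp Require Import all_boot all_order all_algebra.
From mathcomp Require Import algC.
Set Implicit Arguments. Unset Strict Implicit. Unset Printing Implicit Defensive.
Import Order.TTheory GRing.Theory Num.Theory.
Local Open Scope ring_scope.

Definition ncps (A : algType algC) (phi : A -> algC) : Prop :=
  [/\ forall x y : A, phi (x + y) = phi x + phi y,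
      forall (c : algC) (x : A), phi (c *: x) = c * phi x
    & phi 1 = 1].

Definition embedding (A U : algType algC) (f : A -> U) : Prop :=
  [/\ forall x y : A, f (x + y) = f x + f y,
      forall (c : algC) (x : A), f (c *: x) = c *: f x,
      forall x y : A, f (x * y) = f x * f y,
      f 1 = 1
    & injective f].

Definition mixed_moment (A U : algType algC) (phit : U -> algC)
  (iota : nat -> A -> U) (n : nat) (X : 'I_n -> A) (i : 'I_n -> nat) : algC :=
  phit (\prod_(j < n) iota (i j) (X j)).

Record exch_system (A : algType algC) (phi : A -> algC) := ExchSystem {
  es_U : algType algC;
  es_phit : es_U -> algC;
  es_iota : nat -> A -> es_U;
  es_ncps : ncps es_phit;
  es_emb : forall k, embedding (es_iota k);
  es_restr : forall k (x : A), es_phit (es_iota k x) = phi x;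
  es_exch : forall (n : nat) (X : 'I_n -> A) (i : 'I_n -> nat)
              (sigma : nat -> nat), bijective sigma ->
      mixed_moment es_phit es_iota X i
      = mixed_moment es_phit es_iota X (fun j => sigma (i j))
}.
Arguments es_U {A phi}.
Arguments es_phit {A phi}.
Arguments es_iota {A phi}.

Definition same_ker_on (n : nat) (I : {set 'I_n}) (i i' : 'I_n -> nat) : Prop :=
  forall j k : 'I_n, j \in I -> k \in I -> (i j == i k) = (i' j == i' k).

(* phi_pi(X_1..X_n) = phit(X_1^(i_1)...X_n^(i_n)) for any i with ker i = pi;
   E-independence of B and C, written on index tuples. *)
Definition E_independent (A : algType algC) (phi : A -> algC)
  (E : exch_system phi) (B C : A -> Prop) : Prop :=
  forall (n : nat) (X : 'I_n -> A) (I : {set 'I_n}),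
    (forall j, j \in I -> B (X j)) ->
    (forall j, j \notin I -> C (X j)) ->
    forall i i' : 'I_n -> nat,
      same_ker_on I i i' -> same_ker_on (~: I) i i' ->
      mixed_moment (es_phit E) (es_iota E) X i
      = mixed_moment (es_phit E) (es_iota E) X i'.

Definition gen_alg (A : algType algC) (S : A -> Prop) (x : A) : Prop :=
  forall P : A -> Prop,
    (forall s, S s -> P s) -> P 1 ->
    (forall a b, P a -> P b -> P (a + b)) ->
    (forall (c : algC) a, P a -> P (c *: a)) ->
    (forall a b, P a -> P b -> P (a * b)) -> P x.

Definition fam_range (A : Type) (n : nat) (X : 'I_n -> A) (x : A) : Prop :=
  exists j, X j = x.

Definition fam_E_independent (A : algType algC) (phi : A -> algC)
  (E : exch_system phi) (n m : nat) (X : 'I_n -> A) (Y : 'I_m -> A) : Prop :=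
  E_independent E (gen_alg (fam_range X)) (gen_alg (fam_range Y)).

Definition omega_lift (A : algType algC) (phi : A -> algC) (E : exch_system phi)
  (n : nat) (w : algC) (x : A) : es_U E :=
  \sum_(1 <= k < n.+1) (w ^+ k) *: es_iota E k x.

Definition Kn (A : algType algC) (phi : A -> algC) (E : exch_system phi)
  (n : nat) (w : algC) (X : 'I_n -> A) : algC :=
  n%:R^-1 * es_phit E (\prod_(j < n) omega_lift E n w (X j)).

From HB Require Import structures.
From mathcomp Require Import all_boot all_order all_algebra.
From mathcomp Require Import algC.
Set Implicit Arguments. Unset Strict Implicit. Unset Printing Implicit Defensive.
Import GRing.Theory.
Local Open Scope ring_scope.

(* By multilinearity, K_n(X + Y) splits into 2^n terms, one for each choice
   I of the positions carrying an X.  For I = [n] and I = {} these are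
   K_n(X) and K_n(Y).  For any other I, expand the product of the omega-lifts
   over index maps g : [n] -> [n].  Shifting g cyclically (mod n) at the
   positions in I preserves the kernel of g on I and on its complement, so by
   independence it preserves the moment, while it multiplies the weight
   prod_j omega^(g j) by omega^|I|.  The sum is thus fixed by a multiplication by
   omega^|I| <> 1, hence vanishes. *)

Definition shift_on n (I : {set 'I_n}) (g : {ffun 'I_n -> 'I_n}) :
    {ffun 'I_n -> 'I_n} :=
  [ffun j => if j \in I then ordS (g j) else g j].

Lemma shift_on_inj n (I : {set 'I_n}) : injective (shift_on I).
Proof.
move=> g1 g2 /ffunP eq_g; apply/ffunP => j; have := eq_g j; rewrite !ffunE.
by case: (j \in I) => // /ordS_inj.
Qed.

Lemma same_ker_on_shift_on n (I : {set 'I_n}) (g : {ffun 'I_n -> 'I_n}) :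
  same_ker_on I (fun j => (g j).+1) (fun j => (shift_on I g j).+1).
Proof.
move=> j k Ij Ik; rewrite !ffunE Ij Ik !eqSS.
by apply/eqP/eqP => [/val_inj -> | /val_inj/ordS_inj ->].
Qed.

Lemma same_ker_on_shift_onC n (I : {set 'I_n}) (g : {ffun 'I_n -> 'I_n}) :
  same_ker_on (~: I) (fun j => (g j).+1) (fun j => (shift_on I g j).+1).
Proof. by move=> j k; rewrite !inE !ffunE => /negbTE-> /negbTE->. Qed.

Lemma prod_prim_root_shift_on (R : comNzRingType) n (w : R) :
    n.-primitive_root w -> forall (I : {set 'I_n}) (g : {ffun 'I_n -> 'I_n}),
  \prod_(j < n) w ^+ (shift_on I g j).+1
    = w ^+ #|I| * \prod_(j < n) w ^+ (g j).+1.
Proof.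
move=> w_prim I g.
rewrite (bigID (mem I)) [in RHS](bigID (mem I)) /= mulrA; congr (_ * _).
  rewrite -prodr_const -big_split; apply: eq_bigr => j Ij /=.
  rewrite ffunE Ij -exprS; apply/eqP; rewrite (eq_prim_root_expr w_prim) /=.
  by rewrite -(addn1 (_ %% n)) -(addn1 (g j).+1) modnDml.
by apply: eq_bigr => j /negbTE Ij; rewrite ffunE Ij.
Qed.

Lemma card_support_nonconst (T : finType) (f : {ffun T -> bool}) :
    f != [ffun=> false] -> f != [ffun=> true] ->
  (0 < #|[set x | f x]| < #|T|)%N.
Proof.
move=> f_nfalse f_ntrue; apply/andP; split.
  rewrite card_gt0; apply: contraNneq f_nfalse => f0.
  by apply/eqP/ffunP => x; rewrite ffunE; move: (in_set0 x); rewrite -f0 inE.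
rewrite -cardsT; apply: proper_card; rewrite properT.
apply: contraNneq f_ntrue => fT.
by apply/eqP/ffunP => x; rewrite ffunE; move: (in_setT x); rewrite -fT inE.
Qed.

Lemma gen_alg_sub (A : algType algC) (S : A -> Prop) (x : A) :
  S x -> gen_alg S x.
Proof. by move=> Sx P SP _ _ _ _; apply: SP. Qed.

Section OmegaLift.

Variables (A : algType algC) (phi : A -> algC) (E : exch_system phi).

Local Notation phit := (es_phit E).
Local Notation moment := (mixed_moment (es_phit E) (es_iota E)).

Lemma es_phit_sum (I : finType) (P : pred I) (F : I -> es_U E) :
  phit (\sum_(i | P i) F i) = \sum_(i | P i) phit (F i).
Proof.
have [phitD _ _] := es_ncps E.
have phit0 : phit 0 = 0 by apply: (addrI (phit 0)); rewrite -phitD !addr0.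
exact: (big_morph _ phitD phit0).
Qed.

Lemma omega_liftD n w : {morph omega_lift E n w : x y / x + y}.
Proof.
move=> x y; rewrite /omega_lift -big_split; apply: eq_bigr => k _ /=.
by have [iotaD _ _ _ _] := es_emb E k; rewrite iotaD scalerDr.
Qed.

Lemma phit_prod_omega_liftD n w (X Y : 'I_n -> A) :
  phit (\prod_(j < n) omega_lift E n w (X j + Y j))
  = \sum_(f : {ffun 'I_n -> bool})
      phit (\prod_(j < n) omega_lift E n w (if f j then X j else Y j)).
Proof.
rewrite (eq_bigr (fun j => \sum_(b : bool)
    omega_lift E n w (if b then X j else Y j))); last first.
  by move=> j _; rewrite big_bool omega_liftD.
by rewrite bigA_distr_bigA es_phit_sum.
Qed.

Lemma phit_prod_omega_lift n w (Z : 'I_n -> A) :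
  phit (\prod_(j < n) omega_lift E n w (Z j))
  = \sum_(g : {ffun 'I_n -> 'I_n})
      (\prod_(j < n) w ^+ (g j).+1) * moment Z (fun j => (g j).+1).
Proof.
have [_ phitZ _] := es_ncps E.
under eq_bigr => j _ do rewrite /omega_lift big_add1 big_mkord.
rewrite bigA_distr_bigA es_phit_sum; apply: eq_bigr => g _.
by rewrite scaler_prod phitZ.
Qed.

Lemma phit_prod_omega_lift_eq0 n w (Z : 'I_n -> A) (I : {set 'I_n}) :
    n.-primitive_root w -> (0 < #|I| < n)%N ->
    (forall g, moment Z (fun j => (shift_on I g j).+1)
               = moment Z (fun j => (g j).+1)) ->
  phit (\prod_(j < n) omega_lift E n w (Z j)) = 0.
Proof.
move=> w_prim /andP[I_gt0 I_ltn] moment_shift.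
rewrite phit_prod_omega_lift; set S := \sum_g _.
have S_fixed : S = w ^+ #|I| * S.
  rewrite {1}/S (reindex_inj (@shift_on_inj n I)) mulr_sumr.
  apply: eq_bigr => g _.
  by rewrite moment_shift (prod_prim_root_shift_on w_prim) mulrA.
have wI_neq1 : w ^+ #|I| != 1.
  by rewrite -(prim_order_dvd w_prim) gtnNdvd.
have : (1 - w ^+ #|I|) * S = 0 by rewrite mulrBl mul1r -S_fixed subrr.
by move/eqP; rewrite mulf_eq0 subr_eq0 eq_sym (negbTE wI_neq1) => /eqP.
Qed.

Lemma E_independent_moment_shift_on (B C : A -> Prop) n (Z : 'I_n -> A)
    (I : {set 'I_n}) :
    E_independent E B C ->
    (forall j, j \in I -> B (Z j)) -> (forall j, j \notin I -> C (Z j)) ->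
  forall g, moment Z (fun j => (shift_on I g j).+1)
            = moment Z (fun j => (g j).+1).
Proof.
move=> indep ZB ZC g; symmetry; apply: (indep n Z I ZB ZC).
  exact: same_ker_on_shift_on.
exact: same_ker_on_shift_onC.
Qed.

End OmegaLift.

Theorem corollary2p3 (A : algType algC) (phi : A -> algC)
  (Hphi : ncps phi) (E : exch_system phi) (n : nat) (w : algC)
  (Hw : n.-primitive_root w) (X Y : 'I_n -> A)
  (Hind : fam_E_independent E X Y) :
  Kn E w (fun j => X j + Y j) = Kn E w X + Kn E w Y.
Proof.
rewrite /Kn -mulrDr phit_prod_omega_liftD; congr (_ * _).
have false_neq_true : [ffun=> false] != [ffun=> true] :> {ffun 'I_n -> bool}.
  by apply/eqP => /ffunP/(_ (Ordinal (prim_order_gt0 Hw))); rewrite !ffunE.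
rewrite (bigD1 [ffun=> true]) // (bigD1 [ffun=> false]) //=.
rewrite [X in _ + (_ + X)]big1 ?addr0.
  by congr (es_phit E _ + es_phit E _); apply: eq_bigr => j _; rewrite ffunE.
move=> f /andP[f_ntrue f_nfalse].
apply: (phit_prod_omega_lift_eq0 (I := [set j | f j]) Hw).
  by have := card_support_nonconst f_nfalse f_ntrue; rewrite card_ord.
apply: (E_independent_moment_shift_on Hind) => j; rewrite inE.
  by move=> ->; apply: gen_alg_sub; exists j.
by move=> /negbTE ->; apply: gen_alg_sub; exists j.
Qed.
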